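(* For all $n\ge 1$, $|F_n(321,31524)|=\dfrac{P_n+P_{n-1}+1}{2}$, where $P_n$ are the Pell numbers: $P_0=0$, $P_1=1$, $P_n=2P_{n-1}+P_{n-2}$ for $n\ge2$.
   Context: A permutation $\pi$ avoids a classical pattern $p\in S_k$ if no subsequence of $\pi$ of length $k$ is order-isomorphic to $p$. A Fishburn permutation is a permutation $\pi=\pi_1\cdots\pi_n$ of $[n]$ for which there are no indices $i<j$ with $\pi_j<\pi_i<\pi_{i+1}$ and $\pi_i=\pi_j+1$. $F_n(\sigma_1,\dots,\sigma_k)$ denotes the set of Fishburn permutations of length $n$ avoiding each of the classical patterns $\sigma_1,\dots,\sigma_k$. *)

From mathcomp Require Import all_boot all_fingroup.
Set Implicit Arguments. Unset Strict Implicit. Unset Printing Implicit Defensive.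

(* Permutations of [n] are represented as {perm 'I_n} (values 0..n-1). *)

Definition contains (n : nat) (s : {perm 'I_n}) (p : seq nat) : bool :=
  [exists f : {ffun 'I_(size p) -> 'I_n},
    [forall a : 'I_(size p), forall b : 'I_(size p),
       ((a < b) ==> (f a < f b)) &&
       ((nth 0 p a < nth 0 p b) == (s (f a) < s (f b)))]].

Definition avoids (n : nat) (s : {perm 'I_n}) (p : seq nat) : bool :=
  ~~ contains s p.

Definition fishburn (n : nat) (s : {perm 'I_n}) : bool :=
  ~~ [exists i : 'I_n, exists j : 'I_n, exists i1 : 'I_n,
      [&& val i1 == (val i).+1, i < j, s j < s i, s i < s i1
        & val (s i) == (val (s j)).+1]].

Fixpoint pell (n : nat) : nat :=
  match n with
  | 0 => 0
  | 1 => 1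
  | (m.+1 as k).+1 => 2 * pell k + pell m
  end.

Definition F321_31524 (n : nat) : {set {perm 'I_n}} :=
  [set s : {perm 'I_n} | fishburn s && avoids s [:: 3; 2; 1]
                          && avoids s [:: 3; 1; 5; 2; 4]].

From mathcomp Require Import all_boot all_fingroup zify.
Set Implicit Arguments. Unset Strict Implicit. Unset Printing Implicit Defensive.

(* We work with permutations in one-line notation, as sequences of naturals
   (values 0..n-1), and call a sequence "good" when it is Fishburn and avoids
   321 and 31524.  Classifying a good permutation s by its head gives:
   - s_0 = 0: s is a good permutation of length n-1 with a new minimum
     prepended;
   - s_0 = 1: s starts with "1 0", followed by a good one of length n-2;
   - s_0 >= 2: then s_1 = 0 and s_2 is 1 or s_0 + 1, and deleting s_2
     leaves a good permutation t with t_0 >= 1, resp. t_0 >= 2.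
   Conversely each of these four insertions preserves goodness.  This yields
   an explicit duplicate-free list [goodList n] of all good permutations of
   length n, whose size a_n, together with the numbers of its elements with
   head >= 1 and >= 2, satisfies a linear recurrence solved by
   2 a_n = P_n + P_(n-1) + 1.  The file develops, in order: insertion and
   deletion of an entry, transfer of the patterns through insertion, the four
   extensions, the shape lemmas for good heads, the list and its counting, and
   finally the bijection with {perm 'I_n}. *)

Local Notation "s !! i" := (nth 0 s i) (at level 2, left associativity).
Implicit Types (s t : seq nat).

Lemma bumpE h i : bump h i = if h <= i then i.+1 else i.
Proof. by rewrite /bump; case: leqP. Qed.

Lemma unbumpE h i : unbump h i = if h < i then i.-1 else i.
Proof. by rewrite /unbump; case: ltnP => _ /=; rewrite ?subn1 ?subn0. Qed.

Ltac bump_lia := rewrite ?bumpE ?unbumpE; repeat case: ifP; move=> *; lia.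

Lemma ltn_bump2 h a b : (bump h a < bump h b) = (a < b).
Proof. apply/idP/idP; bump_lia. Qed.

Lemma ltn_unbump2 h a b : a != h -> b != h -> (unbump h a < unbump h b) = (a < b).
Proof. move=> /eqP ? /eqP ?; apply/idP/idP; bump_lia. Qed.

Lemma bump_succ h a : a.+1 != h -> bump h a.+1 = (bump h a).+1.
Proof. move=> /eqP ?; bump_lia. Qed.

Lemma unbump_succ h a : a != h -> a.+1 != h -> unbump h a.+1 = (unbump h a).+1.
Proof. move=> /eqP ? /eqP ?; bump_lia. Qed.

Lemma bump_succ_inv h a b : bump h a = (bump h b).+1 -> a = b.+1.
Proof. bump_lia. Qed.

Lemma bump_ltn h i n : i < n -> bump h i < n.+1.
Proof. bump_lia. Qed.

Lemma unbump_ltn h i n : i != h -> h <= n -> i < n.+1 -> unbump h i < n.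
Proof. move=> /eqP ? ? ?; bump_lia. Qed.

Lemma bump_eq0 v x : 0 < v -> bump v x = 0 -> x = 0.
Proof. bump_lia. Qed.

Definition ins (p v : nat) (t : seq nat) : seq nat :=
  take p (map (bump v) t) ++ v :: drop p (map (bump v) t).

Definition del (p : nat) (s : seq nat) : seq nat :=
  map (unbump (s !! p)) (take p s ++ drop p.+1 s).

Lemma size_ins p v t : size (ins p v t) = (size t).+1.
Proof. by rewrite /ins size_cat /= addnS -size_cat cat_take_drop size_map. Qed.

Lemma size_take_map_bump p v t : p <= size t -> size (take p (map (bump v) t)) = p.
Proof. by move=> hp; rewrite size_take size_map; case: ltnP; lia. Qed.

Lemma nth_ins_at p v t : p <= size t -> (ins p v t) !! p = v.
Proof.
by move=> hp; rewrite /ins nth_cat size_take_map_bump // ltnn subnn.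
Qed.

Lemma nth_ins p v t i : p <= size t -> i != p -> i < (size t).+1 ->
  (ins p v t) !! i = bump v (t !! (unbump p i)).
Proof.
move=> hp /eqP hip hi; rewrite /ins nth_cat size_take_map_bump //.
case: ltnP => h.
  rewrite nth_take // (nth_map 0); last lia.
  by rewrite unbumpE; case: ifP => //; lia.
have -> : i - p = (i - p).-1.+1 by lia.
rewrite /= nth_drop (nth_map 0); last lia.
by congr (bump v (t !! _)); rewrite unbumpE; case: ifP; lia.
Qed.

Lemma nth_ins_bump p v t j : p <= size t -> j < size t ->
  (ins p v t) !! (bump p j) = bump v (t !! j).
Proof.
move=> hp hj; rewrite nth_ins ?bumpK //; first by rewrite eq_sym neq_bump.
exact: bump_ltn.
Qed.

Lemma nth_ins_lt p v t i : p <= size t -> i < p ->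
  (ins p v t) !! i = bump v (t !! i).
Proof.
move=> hp hi; have e : bump p i = i by bump_lia.
by rewrite -{1}e nth_ins_bump //; lia.
Qed.

Lemma nth_ins0_succ v t i : i < size t -> (ins 0 v t) !! i.+1 = bump v (t !! i).
Proof. by move=> hi; rewrite -[i.+1]/(bump 0 i) nth_ins_bump. Qed.

Lemma mem_ins p v t x : (x \in ins p v t) = (x == v) || (x \in map (bump v) t).
Proof. by rewrite /ins mem_cat in_cons orbCA -mem_cat cat_take_drop. Qed.

Lemma uniq_ins p v t : uniq (ins p v t) = uniq t.
Proof.
have H := perm_catCA (take p (map (bump v) t)) [:: v] (drop p (map (bump v) t)).
rewrite /ins (perm_uniq (permEl H)) /= cat_take_drop.
rewrite (map_inj_uniq (can_inj (bumpK v))).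
case: (uniq t); rewrite ?andbT ?andbF //.
by apply/negP => /mapP [y _ hy]; have := neq_bump v y; rewrite -hy eqxx.
Qed.

Lemma size_del p s : p < size s -> size (del p s) = (size s).-1.
Proof.
by move=> hp; rewrite /del size_map size_cat size_take size_drop; case: ltnP; lia.
Qed.

Lemma del_ins p v t : p <= size t -> del p (ins p v t) = t.
Proof.
move=> hp; rewrite /del nth_ins_at // /ins.
rewrite take_size_cat ?size_take_map_bump // drop_cat size_take_map_bump //.
rewrite (_ : p.+1 < p = false); last by lia.
rewrite subSnn /= drop0 cat_take_drop -map_comp.
by rewrite (eq_map (bumpK v)) map_id.
Qed.

Lemma ins_inj p v v' t t' : p <= size t -> p <= size t' ->
  ins p v t = ins p v' t' -> t = t'.
Proof. by move=> ht ht' e; rewrite -(del_ins v ht) e del_ins. Qed.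

Lemma nth_inj (s : seq nat) i j : uniq s -> i < size s -> j < size s ->
  s !! i = s !! j -> i = j.
Proof. by move=> hu hi hj /eqP; rewrite nth_uniq // => /eqP. Qed.

Lemma ins_del p s : uniq s -> p < size s -> ins p (s !! p) (del p s) = s.
Proof.
move=> hu hp; have hsz := size_del hp.
apply: (@eq_from_nth _ 0) => [|i]; first by rewrite size_ins hsz; lia.
rewrite size_ins hsz => hi.
have [->|hip] := eqVneq i p; first by rewrite nth_ins_at // hsz; lia.
have hp' : p <= size (del p s) by rewrite hsz; lia.
have hi' : i < (size (del p s)).+1 by rewrite hsz; lia.
rewrite nth_ins //.
have hui : unbump p i < (size s).-1 by apply: unbump_ltn => //; lia.
rewrite /del (nth_map 0); last by move: hui; rewrite -hsz /del size_map.
have -> : (take p s ++ drop p.+1 s) !! (unbump p i) = s !! i.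
  rewrite nth_cat size_take hp unbumpE.
  case: (ltnP p i) => hpi.
    rewrite (_ : i.-1 < p = false); last by lia.
    by rewrite nth_drop; congr (s !! _); lia.
  have hlt : i < p by lia.
  by rewrite hlt nth_take.
have hne : (s !! i == s !! p) = false.
  by rewrite nth_uniq ?(negbTE hip) //; apply: (leq_trans hi); rewrite prednK //; lia.
by rewrite unbumpKcond hne.
Qed.

Definition perm_seq n s := [&& size s == n, uniq s & all (fun x => x < n) s].

Section PermSeq.
Variables (n : nat) (s : seq nat).
Hypothesis ps : perm_seq n s.

Lemma perm_seq_size : size s = n.
Proof. by case/and3P: ps => /eqP. Qed.

Lemma perm_seq_uniq : uniq s.
Proof. by case/and3P: ps. Qed.

Lemma perm_seq_val q : q < n -> s !! q < n.
Proof.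
case/and3P: ps => /eqP hs _ /allP ha hq; apply: ha; apply: mem_nth; by rewrite hs.
Qed.

Lemma perm_seq_inj i j : i < n -> j < n -> s !! i = s !! j -> i = j.
Proof. by move=> hi hj; apply: nth_inj; rewrite ?perm_seq_uniq ?perm_seq_size. Qed.

Lemma perm_seq_pos x : x < n -> exists2 q, q < n & s !! q = x.
Proof.
case/and3P: ps => /eqP hs hu /allP ha hx.
have [_ e] : (size s = size (iota 0 n)) * (s =i iota 0 n).
  apply: uniq_min_size; rewrite ?size_iota ?hs //.
  by move=> y hy; rewrite mem_iota add0n ha.
have hxs : x \in s by rewrite e mem_iota.
by exists (index x s); [rewrite -hs index_mem | exact: nth_index].
Qed.

End PermSeq.

Lemma perm_seq_ins n p v t : perm_seq n t -> v <= n -> perm_seq n.+1 (ins p v t).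
Proof.
case/and3P => /eqP hs hu /allP ha hv; apply/and3P; split.
- by rewrite size_ins hs.
- by rewrite uniq_ins.
apply/allP => x; rewrite mem_ins => /orP [/eqP -> //| /mapP [y hy ->]].
by have := ha y hy; bump_lia.
Qed.

Lemma perm_seq_ins_inv n p v t : perm_seq n.+1 (ins p v t) -> perm_seq n t.
Proof.
case/and3P; rewrite size_ins uniq_ins => /eqP [hs] hu /allP ha.
apply/and3P; split; rewrite ?hs //.
have hv : v < n.+1 by apply: ha; rewrite mem_ins eqxx.
apply/allP => y hy.
have : bump v y < n.+1 by apply: ha; rewrite mem_ins map_f ?orbT.
by move: hv; bump_lia.
Qed.

(* Sequence versions of the three conditions defining F_n(321, 31524).
   [fish_bad s i j] is a Fishburn pattern at positions i < j: the entries
   s_j < s_i < s_(i+1) with s_i = s_j + 1 (the last condition is stated as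
   an inequality, which together with s_j < s_i is equivalent). *)
Definition fish_bad s i j :=
  [&& i < j, j < size s, s !! j < s !! i, s !! i < s !! i.+1 & s !! i <= (s !! j).+1].
Definition fishburn_seq s := forall i j, ~~ fish_bad s i j.

Definition occ321 s i j k :=
  [&& i < j, j < k, k < size s, s !! k < s !! j & s !! j < s !! i].
Definition has321 s := exists i j k, occ321 s i j k.

Definition occ31524 s a b c d e :=
  [&& a < b, b < c, c < d, d < e, e < size s,
   s !! b < s !! d, s !! d < s !! a, s !! a < s !! e & s !! e < s !! c].
Definition has31524 s := exists a b c d e, occ31524 s a b c d e.

Definition good s := [/\ fishburn_seq s, ~ has321 s & ~ has31524 s].

Lemma good_nil : good [::].
Proof.
split; first by move=> i j; apply/negP => /and5P [? ? ? ? ?].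
  by move=> [i [j [k /and5P [? ? ? ? ?]]]].
by move=> [a [b [c [d [e /and5P [? ? ? ? /and5P [? ? ? ? ?]]]]]]].
Qed.

(* Patterns of t survive an insertion, since positions and values of t are
   moved by the monotone maps [bump p] and [bump v]. *)
Lemma has321_ins p v t : p <= size t -> has321 t -> has321 (ins p v t).
Proof.
move=> hp [i [j [k /and5P [h1 h2 h3 h4 h5]]]].
exists (bump p i), (bump p j), (bump p k); apply/and5P.
rewrite !nth_ins_bump ?ltn_bump2 ?size_ins ?bump_ltn //; lia.
Qed.

Lemma has31524_ins p v t : p <= size t -> has31524 t -> has31524 (ins p v t).
Proof.
move=> hp [a [b [c [d [e /and5P [h1 h2 h3 h4 /and5P [h5 h6 h7 h8 h9]]]]]]].
exists (bump p a), (bump p b), (bump p c), (bump p d), (bump p e).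
rewrite /occ31524 !nth_ins_bump ?ltn_bump2 ?size_ins ?bump_ltn //; lia.
Qed.

Lemma has321_of_ins p v t i j k : p <= size t -> occ321 (ins p v t) i j k ->
  i != p -> j != p -> k != p -> has321 t.
Proof.
move=> hp /and5P [h1 h2 h3 h4 h5] hi hj hk; rewrite size_ins in h3.
exists (unbump p i), (unbump p j), (unbump p k); apply/and5P.
move: h4 h5; rewrite !nth_ins ?ltn_bump2 ?ltn_unbump2 //; try lia.
by move=> -> ->; split=> //; apply: unbump_ltn => //; lia.
Qed.

Lemma has31524_of_ins p v t a b c d e : p <= size t -> occ31524 (ins p v t) a b c d e ->
  a != p -> b != p -> c != p -> d != p -> e != p -> has31524 t.
Proof.
move=> hp /and5P [h1 h2 h3 h4 /and5P [h5 h6 h7 h8 h9]] ha hb hc hd he.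
rewrite size_ins in h5.
exists (unbump p a), (unbump p b), (unbump p c), (unbump p d), (unbump p e).
move: h6 h7 h8 h9; rewrite /occ31524 !nth_ins ?ltn_bump2 ?ltn_unbump2 //; try lia.
by move=> -> -> -> ->; rewrite h1 h2 h3 h4 unbump_ltn //; lia.
Qed.

Lemma fishburn_of_ins p v t : p <= size t -> fishburn_seq (ins p v t) ->
  (forall i j, fish_bad t i j -> (i.+1 != p) && ((t !! j).+1 != v)) -> fishburn_seq t.
Proof.
move=> hp hs hr i j; apply/negP => hv.
have /andP [/eqP r1 /eqP r2] := hr i j hv.
move/and5P: hv => [h1 h2 h3 h4 h5].
have e5 : t !! i = (t !! j).+1 by apply/eqP; rewrite eqn_leq h5 h3.
have := hs (bump p i) (bump p j); apply/negP/negPn.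
have e1 : (bump p i).+1 = bump p i.+1 by rewrite bump_succ //; apply/eqP.
rewrite /fish_bad ltn_bump2 e1 !nth_ins_bump ?ltn_bump2 ?size_ins ?bump_ltn //; try lia.
by rewrite h1 h3 h4 e5 bump_succ //=; apply/eqP.
Qed.

Lemma fishburn_ins p v t : p <= size t -> fishburn_seq t ->
  (forall i j, fish_bad (ins p v t) i j -> [&& i != p, j != p & i.+1 != p]) ->
  fishburn_seq (ins p v t).
Proof.
move=> hp ht hr i j; apply/negP => hv.
have /and3P [r1 r2 r3] := hr i j hv.
move/and5P: hv => [h1 h2 h3 h4 h5]; rewrite size_ins in h2.
have e5 : (ins p v t) !! i = ((ins p v t) !! j).+1 by apply/eqP; rewrite eqn_leq h5 h3.
have := ht (unbump p i) (unbump p j); apply/negP/negPn.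
have e1 : (unbump p i).+1 = unbump p i.+1 by rewrite unbump_succ.
move: h3 h4 e5; rewrite !nth_ins ?size_ins //; try lia.
rewrite /fish_bad ltn_unbump2 // e1 !ltn_bump2 => -> -> /bump_succ_inv ->.
by rewrite leqnn !andbT unbump_ltn //; lia.
Qed.

Lemma good_ins p v t : p <= size t -> good t ->
  (forall i j, fish_bad (ins p v t) i j -> [&& i != p, j != p & i.+1 != p]) ->
  (forall i j k, occ321 (ins p v t) i j k -> [|| i == p, j == p | k == p] -> has321 t) ->
  (forall a b c d e, occ31524 (ins p v t) a b c d e ->
      [|| a == p, b == p, c == p, d == p | e == p] -> has31524 t) ->
  good (ins p v t).
Proof.
move=> hp [hf h3 h5] rf r3 r5; split; first exact: fishburn_ins.
  move=> [i [j [k H]]]; apply: h3.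
  have [/r3|] := boolP [|| i == p, j == p | k == p]; first exact.
  by rewrite !negb_or => /and3P [hi hj hk]; apply: has321_of_ins H hi hj hk.
move=> [a [b [c [d [e H]]]]]; apply: h5.
have [/r5|] := boolP [|| a == p, b == p, c == p, d == p | e == p]; first exact.
rewrite !negb_or => /and5P [ha hb hc hd he].
exact: has31524_of_ins H ha hb hc hd he.
Qed.

(* Goodness descends from [ins p v t] to t (patterns only need the Fishburn
   condition to be checked). *)
Lemma good_of_ins p v t : p <= size t -> good (ins p v t) ->
  (forall i j, fish_bad t i j -> (i.+1 != p) && ((t !! j).+1 != v)) -> good t.
Proof.
move=> hp [hf h3 h5] rf; split; first exact: fishburn_of_ins hf rf.
  by move=> H; apply: h3; apply: has321_ins.
by move=> H; apply: h5; apply: has31524_ins.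
Qed.

Ltac case_positions H := repeat (case/orP: H => H); move/eqP: H => ?; subst.

Definition ext0 t := ins 0 0 t.
Definition ext1 t := ins 0 1 (ext0 t).
Definition ext2 t := ins 2 1 t.
Definition ext3 t := ins 2 (t !! 0).+1 t.

Lemma good_ext0 t : good t -> good (ext0 t).
Proof.
move=> g; apply: good_ins => //.
- move=> i j /and5P [h1 h2 h3 h4 h5]; rewrite andbT.
  have [e|/eqP ne] := eqVneq i 0; last by apply/andP; split; apply/eqP; lia.
  by move: h5 h3; rewrite e nth_ins_at; lia.
- move=> i j k /and5P [h1 h2 h3 h4 h5] hor; have {}hor : i = 0 by case_positions hor; lia.
  by move: h5; rewrite hor nth_ins_at.
- move=> a b c d e /and5P [h1 h2 h3 h4 /and5P [h5 h6 h7 h8 h9]] hor.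
  have {}hor : a = 0 by case_positions hor; lia.
  by move: h7; rewrite hor nth_ins_at.
Qed.

Lemma good_prepend1 t : good t -> t !! 0 = 0 -> good (ins 0 1 t).
Proof.
move=> g t0; apply: good_ins => //.
- move=> i j /and5P [h1 h2 h3 h4 h5]; rewrite andbT.
  have [e|/eqP ne] := eqVneq i 0; last by apply/andP; split; apply/eqP; lia.
  rewrite size_ins in h2; move: h4; rewrite e nth_ins_at // nth_ins0_succ ?t0 //; lia.
- move=> i j k /and5P [h1 h2 h3 h4 h5] hor; have {}hor : i = 0 by case_positions hor; lia.
  by move: h5 h4; rewrite hor nth_ins_at; lia.
- move=> a b c d e /and5P [h1 h2 h3 h4 /and5P [h5 h6 h7 h8 h9]] hor.
  have {}hor : a = 0 by case_positions hor; lia.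
  by move: h6 h7; rewrite hor nth_ins_at; lia.
Qed.

Lemma good_ext1 t : good t -> good (ext1 t).
Proof. by move=> g; apply: good_prepend1; [apply: good_ext0 | apply: nth_ins_at]. Qed.

Lemma good_ext2 t : uniq t -> good t -> 2 <= size t -> 1 <= t !! 0 -> t !! 1 = 0 ->
  good (ext2 t).
Proof.
rewrite /ext2 => ut g st t0 t1.
have us : uniq (ins 2 1 t) by rewrite uniq_ins.
have ss : size (ins 2 1 t) = (size t).+1 := size_ins _ _ _.
have s0 : (ins 2 1 t) !! 0 = (t !! 0).+1 by rewrite nth_ins_lt //; bump_lia.
have s1 : (ins 2 1 t) !! 1 = 0 by rewrite nth_ins_lt // t1.
have s2 : (ins 2 1 t) !! 2 = 1 by rewrite nth_ins_at.
have z x : x < (size t).+1 -> (ins 2 1 t) !! x < 1 -> x = 1.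
  by move=> hx hv; apply: (nth_inj us); rewrite ?ss //; lia.
(* A Fishburn pattern cannot use position 1 or 2, and a 321 cannot use the
   new entry 1; a 31524 whose "1" is the new entry uses the 0 instead. *)
apply: good_ins => //.
- move=> i j /and5P [h1 h2 h3 h4 h5]; rewrite ss in h2.
  have i1 : i != 1 by apply/eqP => e; subst i; lia.
  have i2 : i != 2.
    apply/eqP => e; subst i.
    have hj : j = 1 by apply: (z j h2); lia.
    lia.
  have j2 : j != 2.
    apply/eqP => e; subst j; have e : i = 0 by lia.
    by subst i; lia.
  by rewrite i2 j2 /=; apply/eqP; lia.
- move=> i j k /and5P [h1 h2 h3 h4 h5] hor; rewrite ss in h3; exfalso.
  case_positions hor.
  + have hj : j = 1 by apply: z; lia.
    lia.
  + have hk : k = 1 by apply: z; lia.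
    lia.
  + have hi : i = 0 by lia.
    have hj : j = 1 by lia.
    by subst; lia.
- move=> a b c d e /and5P [h1 h2 h3 h4 /and5P [h5 h6 h7 h8 h9]] hor.
  rewrite ss in h5; exfalso; case_positions hor; try lia.
  have [ea|/eqP na] := eqVneq a 1; first by subst; lia.
  have ea : a = 0 by lia.
  subst a; case: g => _ _; apply.
  apply: (@has31524_of_ins 2 1 t 0 1 c d e) => //; try (apply/eqP; lia).
  by rewrite /occ31524 ss; apply/and5P; split; try lia; apply/and5P; split; lia.
Qed.

Lemma good_ext3 t : uniq t -> good t -> 2 <= size t -> 2 <= t !! 0 -> t !! 1 = 0 ->
  good (ext3 t).
Proof.
rewrite /ext3 => ut g st t0 t1.
set v := (t !! 0).+1.
have us : uniq (ins 2 v t) by rewrite uniq_ins.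
have ss : size (ins 2 v t) = (size t).+1 := size_ins _ _ _.
have s0 : (ins 2 v t) !! 0 = t !! 0 by rewrite nth_ins_lt //; bump_lia.
have s1 : (ins 2 v t) !! 1 = 0 by rewrite nth_ins_lt // t1.
have s2 : (ins 2 v t) !! 2 = v by rewrite nth_ins_at.
have z x : x < (size t).+1 -> (ins 2 v t) !! x = t !! 0 -> x = 0.
  by move=> hx hv; apply: (nth_inj us); rewrite ?ss //; lia.
case: g => gf g3 g5.
(* A Fishburn pattern cannot use position 1 or 2; a 321 or 31524 whose
   "3" is the new entry t_0 + 1 can use t_0 at position 0 instead. *)
apply: good_ins => //.
- move=> i j /and5P [h1 h2 h3 h4 h5]; rewrite ss in h2.
  have i1 : i != 1 by apply/eqP => e; subst i; lia.
  have i2 : i != 2.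
    apply/eqP => e; subst i.
    have hj : j = 0 by apply: (z j h2); lia.
    lia.
  have j2 : j != 2.
    apply/eqP => e; subst j; have e : i = 0 by lia.
    by subst i; lia.
  by rewrite i2 j2 /=; apply/eqP; lia.
- move=> i j k /and5P [h1 h2 h3 h4 h5] hor; rewrite ss in h3; exfalso.
  case_positions hor.
  + have hj : (ins 2 v t) !! j != t !! 0 by apply/eqP => /(z j) e; lia.
    apply: g3; apply: (@has321_of_ins 2 v t 0 j k) => //; try (apply/eqP; lia).
    by rewrite /occ321 ss; apply/and5P; split; lia.
  + have [hi|hi] := ltnP i 1.
      have e : i = 0 by lia.
      by subst; lia.
    have e : i = 1 by lia.
    by subst; lia.
  + have hi : i = 0 by lia.
    have hj : j = 1 by lia.
    by subst; lia.
- move=> a b c d e /and5P [h1 h2 h3 h4 /and5P [h5 h6 h7 h8 h9]] hor.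
  rewrite ss in h5; exfalso; case_positions hor; try lia.
  + have hd : (ins 2 v t) !! d != t !! 0 by apply/eqP => /(z d) e0; lia.
    apply: g5; apply: (@has31524_of_ins 2 v t 0 b c d e) => //; try (apply/eqP; lia).
    by rewrite /occ31524 ss; apply/and5P; split; try lia; apply/and5P; split; lia.
  + have [ha|ha] := ltnP a 1.
      have e0 : a = 0 by lia.
      by subst; lia.
    have e0 : a = 1 by lia.
    by subst; lia.
  + have ha : a = 0 by lia.
    have hb : b = 1 by lia.
    by subst; lia.
Qed.

Lemma good_of_ext0 t : good (ext0 t) -> good t.
Proof. by move=> g; apply: (good_of_ins _ g). Qed.

Lemma good_of_prepend1 t : uniq t -> t !! 0 = 0 -> good (ins 0 1 t) -> good t.
Proof.
move=> ut t0 g; apply: (good_of_ins _ g) => // i j /and5P [h1 h2 h3 h4 h5] /=.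
apply/eqP => e; have hj : j = 0 by apply: (nth_inj ut) => //; lia.
lia.
Qed.

Lemma good_of_ins2 t v : uniq t -> 2 <= size t -> t !! 1 = 0 ->
  (forall j, j < size t -> (t !! j).+1 = v -> j <= 1) ->
  good (ins 2 v t) -> good t.
Proof.
move=> ut st t1 hv g; apply: (good_of_ins _ g) => // i j /and5P [h1 h2 h3 h4 h5].
have i1 : i != 1 by apply/eqP => e; subst; lia.
rewrite i1 /=; apply/eqP => /(hv j h2) hj.
have hi : i = 0 by lia.
have hj' : j = 1 by lia.
by subst; lia.
Qed.

(* Shape of a good permutation with a nonzero head: its second entry is 0
   (the value s_0 - 1 lies to the right of s_0, so s_0 > s_1 by the Fishburn
   condition, and then 0 must follow s_0 immediately to avoid 321). *)
Lemma good_head_pos n s : perm_seq n s -> good s -> 1 <= s !! 0 ->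
  2 <= n /\ s !! 1 = 0.
Proof.
move=> ps [gf g3 g5] h0.
have hsz := perm_seq_size ps.
have hn : 0 < n by case: n ps hsz => // _ /size0nil hs; move: h0; rewrite hs.
have hs0 := perm_seq_val ps hn.
have [r hr sr] := perm_seq_pos ps (x := (s !! 0).-1) (ltac:(lia)).
have r0 : r != 0 by apply/eqP => e; subst; lia.
have hn2 : 2 <= n by lia.
have s1k : s !! 1 < s !! 0.
  case: (ltnP (s !! 0) (s !! 1)) => hh.
    have : fish_bad s 0 r by rewrite /fish_bad hsz; apply/and5P; split; lia.
    by rewrite (negbTE (gf 0 r)).
  have ne : s !! 1 <> s !! 0 by move=> /(perm_seq_inj ps) => /(_ ltac:(lia) ltac:(lia)).
  lia.
split=> //.
have [q hq sq] := perm_seq_pos ps hn.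
have q0 : q != 0 by apply/eqP => e; subst; lia.
have [e1|q1] := eqVneq q 1; first by subst.
exfalso; apply: g3; exists 0, 1, q; rewrite /occ321 hsz.
have ne : s !! 1 <> 0.
  move=> e; have : 1 = q by apply: (perm_seq_inj ps) => //; try lia; rewrite e sq.
  lia.
apply/and5P; split; lia.
Qed.

(* If moreover s_0 >= 2, the third entry is 1 or s_0 + 1: a smaller value
   would create a 321 with the later 1, a larger one a 321 or a 31524 with
   the later values s_0 - 1 and s_0 + 1. *)
Lemma good_head_ge2 n s : perm_seq n s -> good s -> 2 <= s !! 0 ->
  [/\ 3 <= n, s !! 1 = 0 & (s !! 2 = 1 \/ s !! 2 = (s !! 0).+1)].
Proof.
move=> ps g h0.
have [hn2 s1] := good_head_pos ps g (ltac:(lia)).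
case: g => gf g3 g5.
have hsz := perm_seq_size ps.
have hs0 := perm_seq_val ps (ltac:(lia) : 0 < n).
have hn3 : 3 <= n by lia.
split=> //.
have x_lt := perm_seq_val ps (ltac:(lia) : 2 < n).
have inj := perm_seq_inj ps.
have x0 : s !! 2 <> 0 by move=> e; have := inj 2 1; lia.
have xk : s !! 2 <> s !! 0 by move=> e; have := inj 2 0; lia.
case: (ltnP (s !! 2) (s !! 0)) => hx.
  left.
  have [q hq sq] := perm_seq_pos ps (x := 1) (ltac:(lia)).
  have q0 : q <> 0 by move=> e; subst; lia.
  have q1 : q <> 1 by move=> e; subst; lia.
  have [e2|/eqP q2] := eqVneq q 2; first by subst.
  exfalso; apply: g3; exists 0, 2, q; rewrite /occ321 hsz.
  have xne : s !! 2 <> 1 by move=> e; have := inj 2 q; lia.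
  apply/and5P; split; lia.
right.
have [//|/eqP hne] := eqVneq (s !! 2) (s !! 0).+1; exfalso.
have [r hr sr] := perm_seq_pos ps (x := (s !! 0).-1) (ltac:(lia)).
have [q hq sq] := perm_seq_pos ps (x := (s !! 0).+1) (ltac:(lia)).
have r3 : 2 < r by move: hr sr; case: r => [|[|[|r]]] hr sr; lia.
have q3 : 2 < q by move: hq sq; case: q => [|[|[|q]]] hq sq; lia.
have rq : r <> q by move=> e; subst; lia.
case: (ltnP q r) => hqr.
  by apply: g3; exists 2, q, r; rewrite /occ321 hsz; apply/and5P; split; lia.
apply: g5; exists 0, 1, 2, r, q; rewrite /occ31524 hsz.
by apply/and5P; split; try lia; apply/and5P; split; lia.
Qed.

Lemma decomp_head0 m s : perm_seq m.+1 s -> good s -> s !! 0 = 0 ->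
  [/\ perm_seq m (del 0 s), good (del 0 s) & s = ext0 (del 0 s)].
Proof.
move=> ps g h0.
have es : ext0 (del 0 s) = s.
  by have := @ins_del 0 s (perm_seq_uniq ps); rewrite (perm_seq_size ps) h0; apply.
by rewrite -es in ps g *; rewrite del_ins //; split=> //;
  [apply: perm_seq_ins_inv ps | apply: good_of_ext0].
Qed.

Lemma decomp_head1 m s : perm_seq m.+2 s -> good s -> s !! 0 = 1 ->
  let t := del 0 (del 0 s) in [/\ perm_seq m t, good t & s = ext1 t].
Proof.
move=> ps g h0 t.
have [_ s1] := good_head_pos ps g (ltac:(lia)).
set u := del 0 s.
have es : ins 0 1 u = s.
  by have := @ins_del 0 s (perm_seq_uniq ps); rewrite (perm_seq_size ps) h0; apply.
have pu : perm_seq m.+1 u by apply: (@perm_seq_ins_inv _ 0 1); rewrite es.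
have u0 : u !! 0 = 0.
  by apply: (@bump_eq0 1) => //; rewrite -nth_ins0_succ ?es ?(perm_seq_size pu).
have gu : good u by apply: (good_of_prepend1 (perm_seq_uniq pu)) => //; rewrite es.
have [pt gt et] := decomp_head0 pu gu u0.
by split=> //; rewrite /ext1 -et.
Qed.

Lemma decomp_head_ge2 m s : perm_seq m.+1 s -> good s -> 2 <= s !! 0 ->
  let t := del 2 s in
  [/\ perm_seq m t, good t &
      (1 <= t !! 0 /\ s = ext2 t) \/ (2 <= t !! 0 /\ s = ext3 t)].
Proof.
move=> ps g h0 t.
have [hm3 s1 s2] := good_head_ge2 ps g h0.
have hsz := perm_seq_size ps.
have es : ins 2 (s !! 2) t = s by apply: ins_del; [exact: perm_seq_uniq ps | rewrite hsz].
have pt : perm_seq m t by apply: (@perm_seq_ins_inv _ 2 (s !! 2)); rewrite es.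
have st : size t = m := perm_seq_size pt.
have e0 : s !! 0 = bump (s !! 2) (t !! 0) by rewrite -{1}es nth_ins_lt //; lia.
have e1 : s !! 1 = bump (s !! 2) (t !! 1) by rewrite -{1}es nth_ins_lt //; lia.
have t1 : t !! 1 = 0 by apply: (@bump_eq0 (s !! 2)); lia.
have tinj := perm_seq_inj pt.
have ut := perm_seq_uniq pt.
case: s2 => s2; rewrite s2 in es.
- have t0 : 1 <= t !! 0 by move: e0; rewrite s2; bump_lia.
  split=> //; last by left.
  apply: (@good_of_ins2 t 1) => //; rewrite ?es //; first lia.
  by move=> j hj hv; rewrite (tinj j 1) //; lia.
- have t0 : t !! 0 = s !! 0 by move: e0; rewrite s2; bump_lia.
  split=> //; last by right; split; [lia | rewrite /ext3 t0].
  apply: (@good_of_ins2 t (s !! 0).+1) => //; rewrite ?es //; first lia.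
  by move=> j hj hv; rewrite (tinj j 0) //; lia.
Qed.

Fixpoint goodList (n : nat) : seq (seq nat) :=
  match n with
  | 0 => [:: [::]]
  | m.+1 => [seq ext0 t | t <- goodList m]
      ++ (match m with 0 => [::] | k.+1 => [seq ext1 t | t <- goodList k] end)
      ++ [seq ext2 t | t <- goodList m & 1 <= t !! 0]
      ++ [seq ext3 t | t <- goodList m & 2 <= t !! 0]
  end.

Definition goodList1 (m : nat) : seq (seq nat) :=
  if m is k.+1 then [seq ext1 t | t <- goodList k] else [::].

Lemma goodListS m : goodList m.+1 = [seq ext0 t | t <- goodList m] ++ goodList1 m
      ++ [seq ext2 t | t <- goodList m & 1 <= t !! 0]
      ++ [seq ext3 t | t <- goodList m & 2 <= t !! 0].
Proof. by []. Qed.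

Lemma goodList_good n s : s \in goodList n -> perm_seq n s /\ good s.
Proof.
elim/ltn_ind: n s => [[|m]] IH s; first by rewrite inE => /eqP ->; split; last exact: good_nil.
rewrite goodListS !mem_cat => /or4P [].
- move=> /mapP [t /(IH m (ltnSn m)) [pt gt] ->].
  by split; [apply: perm_seq_ins | apply: good_ext0].
- case: m IH => [//|k] IH /mapP [t /(IH k (ltnW (ltnSn k.+1))) [pt gt] ->].
  by split; [do 2 apply: perm_seq_ins => // | apply: good_ext1].
- move=> /mapP [t]; rewrite mem_filter => /andP [h0 /(IH m (ltnSn m)) [pt gt]] ->.
  have [hm t1] := good_head_pos pt gt h0.
  split; first by apply: perm_seq_ins; lia.
  by apply: good_ext2; rewrite ?(perm_seq_uniq pt) ?(perm_seq_size pt).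
- move=> /mapP [t]; rewrite mem_filter => /andP [h0 /(IH m (ltnSn m)) [pt gt]] ->.
  have [hm t1] := good_head_pos pt gt (ltac:(lia)).
  have hv := perm_seq_val pt (ltac:(lia) : 0 < m).
  split; first by apply: perm_seq_ins; lia.
  by apply: good_ext3; rewrite ?(perm_seq_uniq pt) ?(perm_seq_size pt).
Qed.

Lemma goodList_complete n s : perm_seq n s -> good s -> s \in goodList n.
Proof.
elim/ltn_ind: n s => [[|m]] IH s ps g.
  by move/size0nil: (perm_seq_size ps) => ->; rewrite inE.
rewrite goodListS !mem_cat.
case: (ltnP (s !! 0) 1) => h0.
  have [pt gt ->] := decomp_head0 ps g (ltac:(lia)).
  by rewrite map_f ?IH.
case: (ltnP (s !! 0) 2) => h1.
  have [hm _] := good_head_pos ps g h0.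
  case: m IH ps hm => [//|k] IH ps _.
  have [pt gt ->] := decomp_head1 ps g (ltac:(lia)).
  by rewrite map_f ?orbT ?IH.
have [pt gt [[t0 ->]|[t0 ->]]] := decomp_head_ge2 ps g h1.
  by rewrite map_f ?orbT // mem_filter t0 IH.
by rewrite map_f ?orbT // mem_filter t0 IH.
Qed.

(* The four parts of [goodList] are disjoint, as witnessed by the following
   invariant, and each part is duplicate-free since insertions are
   injective. *)
Definition ext_kind (x : seq nat) : nat :=
  if x !! 0 < 2 then x !! 0 else if x !! 2 == 1 then 2 else 3.

Lemma goodList_size2 m t : t \in goodList m -> 1 <= t !! 0 -> 2 <= size t.
Proof.
move=> /goodList_good [pt gt] h0; have [hm _] := good_head_pos pt gt h0.
by rewrite (perm_seq_size pt).
Qed.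

Lemma head_ext2 t : 2 <= size t -> 1 <= t !! 0 -> (ext2 t) !! 0 = (t !! 0).+1.
Proof. by move=> st h0; rewrite nth_ins_lt //; bump_lia. Qed.

Lemma head_ext3 t : 2 <= size t -> (ext3 t) !! 0 = t !! 0.
Proof. by move=> st; rewrite nth_ins_lt //; bump_lia. Qed.

Lemma kind_ext2 t : 2 <= size t -> 1 <= t !! 0 -> ext_kind (ext2 t) = 2.
Proof.
move=> st h0; rewrite /ext_kind head_ext2 // nth_ins_at //.
by rewrite ltnS ltnNge h0.
Qed.

Lemma kind_ext3 t : 2 <= size t -> 2 <= t !! 0 -> ext_kind (ext3 t) = 3.
Proof.
move=> st h0; rewrite /ext_kind head_ext3 // nth_ins_at //.
by rewrite ltnNge h0 eqSS; case: (t !! 0) h0.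
Qed.

Lemma disjoint_by_kind (A B : seq (seq nat)) k :
  {in A, forall x, ext_kind x = k} -> {in B, forall x, ext_kind x != k} -> ~~ has (mem A) B.
Proof. by move=> hA hB; apply/hasPn => x /hB; apply: contra => /hA ->. Qed.

Lemma goodList_uniq n : uniq (goodList n).
Proof.
elim/ltn_ind: n => [[//|m]] IH.
have IHm : uniq (goodList m) by apply: IH.
have kind0 : {in [seq ext0 t | t <- goodList m], forall x, ext_kind x = 0}.
  by move=> x /mapP [t _ ->]; rewrite /ext_kind nth_ins_at.
have kind1 : {in goodList1 m, forall x, ext_kind x = 1}.
  by case: m {IH IHm kind0} => //= k x /mapP [t _ ->]; rewrite /ext_kind nth_ins_at.
have kind2 : {in [seq ext2 t | t <- goodList m & 1 <= t !! 0], forall x, ext_kind x = 2}.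
  move=> x /mapP [t]; rewrite mem_filter => /andP [h0 ht] ->.
  exact: kind_ext2 (goodList_size2 ht h0) h0.
have kind3 : {in [seq ext3 t | t <- goodList m & 2 <= t !! 0], forall x, ext_kind x = 3}.
  move=> x /mapP [t]; rewrite mem_filter => /andP [h0 ht] ->.
  exact: kind_ext3 (goodList_size2 ht (ltnW h0)) h0.
rewrite goodListS !cat_uniq; apply/and5P; split; [| | | |apply/and3P; split].
- by rewrite map_inj_uniq // => t1 t2 /ins_inj; apply.
- apply: (disjoint_by_kind kind0) => x.
  by rewrite !mem_cat => /or3P [/kind1|/kind2|/kind3] ->.
- case: m IH {IHm kind0 kind1 kind2 kind3} => [//|k] IH /=.
  rewrite map_inj_uniq; first exact: IH k (leqnSn _).
  by move=> t1 t2 /ins_inj /ins_inj; apply.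
- apply: (disjoint_by_kind kind1) => x.
  by rewrite !mem_cat => /orP [/kind2|/kind3] ->.
- rewrite map_inj_in_uniq ?filter_uniq // => t1 t2.
  rewrite !mem_filter => /andP [h1 /goodList_size2 s1] /andP [h2 /goodList_size2 s2].
  by move/ins_inj; apply; [apply: s1 | apply: s2].
- by apply: (disjoint_by_kind kind2) => x /kind3 ->.
- rewrite map_inj_in_uniq ?filter_uniq // => t1 t2.
  rewrite !mem_filter => /andP [h1 /goodList_size2 s1] /andP [h2 /goodList_size2 s2].
  by move/ins_inj; apply; [apply: s1 | apply: s2]; lia.
Qed.

Definition cnt1 m := count (fun t => 1 <= t !! 0) (goodList m).
Definition cnt2 m := count (fun t => 2 <= t !! 0) (goodList m).

Lemma size_goodList1 m : size (goodList1 m.+1) = size (goodList m).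
Proof. by rewrite size_map. Qed.

Lemma count_all_in (P : pred (seq nat)) l : {in l, forall x, P x} -> count P l = size l.
Proof. by move=> h; apply/eqP; rewrite -all_count; apply/allP. Qed.

Lemma count_none_in (P : pred (seq nat)) l : {in l, forall x, ~~ P x} -> count P l = 0.
Proof. by move=> h; apply/eqP; rewrite -leqn0 leqNgt -has_count; apply/hasPn. Qed.

Lemma head_part0 m : {in [seq ext0 t | t <- goodList m], forall x, x !! 0 = 0}.
Proof. by move=> x /mapP [t _ ->]; rewrite nth_ins_at. Qed.

Lemma head_part1 m : {in goodList1 m, forall x, x !! 0 = 1}.
Proof. by case: m => //= k x /mapP [t _ ->]; rewrite nth_ins_at. Qed.

Lemma head_part2 m : {in [seq ext2 t | t <- goodList m & 1 <= t !! 0], forall x, 2 <= x !! 0}.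
Proof.
move=> x /mapP [t]; rewrite mem_filter => /andP [h0 ht] ->.
by rewrite head_ext2 ?(goodList_size2 ht h0).
Qed.

Lemma head_part3 m : {in [seq ext3 t | t <- goodList m & 2 <= t !! 0], forall x, 2 <= x !! 0}.
Proof.
move=> x /mapP [t]; rewrite mem_filter => /andP [h0 ht] ->.
by rewrite head_ext3 ?(goodList_size2 ht (ltnW h0)).
Qed.

Lemma size_goodListS m :
  size (goodList m.+1) = size (goodList m) + size (goodList1 m) + cnt1 m + cnt2 m.
Proof. by rewrite goodListS !size_cat !size_map !size_filter !addnA. Qed.

Lemma cnt1S m : cnt1 m.+1 = size (goodList1 m) + cnt1 m + cnt2 m.
Proof.
rewrite {1}/cnt1 goodListS !count_cat.
rewrite (count_none_in (l := [seq ext0 t | t <- goodList m])); last first.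
  by move=> x /head_part0 ->.
rewrite !count_all_in; last 3 first.
- by move=> x /head_part3; lia.
- by move=> x /head_part2; lia.
- by move=> x /head_part1 ->.
by rewrite !size_map !size_filter add0n addnA.
Qed.

Lemma cnt2S m : cnt2 m.+1 = cnt1 m + cnt2 m.
Proof.
rewrite {1}/cnt2 goodListS !count_cat.
rewrite (count_none_in (l := [seq ext0 t | t <- goodList m])); last first.
  by move=> x /head_part0 ->.
rewrite (count_none_in (l := goodList1 m)); last first.
  by move=> x /head_part1 ->.
rewrite !count_all_in; last 2 first.
- by move=> x /head_part3.
- by move=> x /head_part2.
by rewrite !size_map !size_filter.
Qed.

Lemma pellSS m : pell m.+2 = 2 * pell m.+1 + pell m.
Proof. by []. Qed.

(* Solving the recurrence: 2 a m = P m + P (m-1) + 1 for m >= 1, together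
   with the auxiliary identities that make the induction go through. *)
Lemma size_goodList_pell m :
  [/\ pell m.+1 + 1 = pell m + 2 * size (goodList m),
      pell m.+2 + 1 = pell m.+1 + 2 * size (goodList m.+1),
      cnt1 m.+2 = pell m.+1 & cnt2 m.+2 + size (goodList m) = pell m.+1].
Proof.
elim: m => [|m [IH1 IH2 IH3 IH4]]; first by vm_compute.
have eA := size_goodListS m.+1; have eA' := size_goodListS m.+2.
have e1 := cnt1S m.+1; have e1' := cnt1S m.+2.
have e2 := cnt2S m.+1; have e2' := cnt2S m.+2.
rewrite !size_goodList1 in eA eA' e1 e1'.
have p1 := pellSS m; have p2 := pellSS m.+1; have p3 := pellSS m.+2.
split; lia.
Qed.

Definition seq_of_perm n (s : {perm 'I_n}) : seq nat := [seq val (s i) | i <- enum 'I_n].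

Lemma size_seq_of_perm n (s : {perm 'I_n}) : size (seq_of_perm s) = n.
Proof. by rewrite /seq_of_perm size_map size_enum_ord. Qed.

Lemma nth_seq_of_perm n (s : {perm 'I_n}) (i : 'I_n) : (seq_of_perm s) !! i = s i.
Proof. by rewrite /seq_of_perm (nth_map i) ?size_enum_ord // nth_ord_enum. Qed.

Lemma perm_seq_of_perm n (s : {perm 'I_n}) : perm_seq n (seq_of_perm s).
Proof.
apply/and3P; split; first by rewrite size_seq_of_perm.
  by rewrite map_inj_uniq ?enum_uniq // => i j /val_inj; exact: perm_inj.
by apply/allP => x /mapP [i _ ->]; exact: ltn_ord.
Qed.

Lemma seq_of_perm_inj n : injective (@seq_of_perm n).
Proof.
move=> s1 s2 e; apply/permP => i; apply/val_inj.
by have := congr1 (fun l => l !! i) e; rewrite /= !nth_seq_of_perm.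
Qed.

Lemma seq_of_perm_onto n l : perm_seq n l -> exists s : {perm 'I_n}, seq_of_perm s = l.
Proof.
move=> pl.
pose f (i : 'I_n) : 'I_n := Ordinal (perm_seq_val pl (ltn_ord i)).
have finj : injective f.
  move=> i j /(congr1 val) /= e; apply/val_inj => /=.
  exact: (perm_seq_inj pl (ltn_ord i) (ltn_ord j) e).
exists (perm finj); apply: (@eq_from_nth _ 0) => [|i].
  by rewrite size_seq_of_perm (perm_seq_size pl).
rewrite size_seq_of_perm => hi.
by rewrite -[i]/(val (Ordinal hi)) nth_seq_of_perm permE.
Qed.

Lemma fishburnE n (s : {perm 'I_n}) : fishburn s <-> fishburn_seq (seq_of_perm s).
Proof.
split.
  move=> hf i j; apply/negP => /and5P [h1 h2 h3 h4 h5].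
  rewrite size_seq_of_perm in h2.
  have hi : i < n by lia.
  have hi1 : i.+1 < n by lia.
  move/negP: hf; apply; apply/existsP; exists (Ordinal hi).
  apply/existsP; exists (Ordinal h2); apply/existsP; exists (Ordinal hi1).
  move: h3 h4 h5.
  rewrite -[i]/(val (Ordinal hi)) -[j]/(val (Ordinal h2)) -[i.+1]/(val (Ordinal hi1)).
  by rewrite !nth_seq_of_perm /=; lia.
move=> hf; apply/negP => /existsP [i /existsP [j /existsP [i1 H]]].
move/and5P: H => [/eqP e1 h2 h3 h4 /eqP h5].
have e2 : (seq_of_perm s) !! (val i).+1 = val (s i1) by rewrite -e1 nth_seq_of_perm.
have := hf i j; rewrite /fish_bad size_seq_of_perm ltn_ord e2 !nth_seq_of_perm.
by move=> /negP; apply; rewrite h2 h3 h4 /= h5.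
Qed.

Lemma contains321E n (s : {perm 'I_n}) :
  contains s [:: 3; 2; 1] <-> has321 (seq_of_perm s).
Proof.
split.
  case/existsP => f /forallP H.
  pose o (k : nat) (hk : k < 3) : 'I_(size [:: 3; 2; 1]) := Ordinal hk.
  have H01 := forallP (H (o 0 isT)) (o 1 isT).
  have H12 := forallP (H (o 1 isT)) (o 2 isT).
  have H10 := forallP (H (o 1 isT)) (o 0 isT).
  have H21 := forallP (H (o 2 isT)) (o 1 isT).
  move: H01 H12 H10 H21.
  move: (f (o 0 isT)) (f (o 1 isT)) (f (o 2 isT)) => x0 x1 x2 /= H01 H12 H10 H21.
  exists x0, x1, x2; rewrite /occ321 size_seq_of_perm !nth_seq_of_perm ltn_ord.
  by apply/and5P; split; lia.
move=> [i [j [k /and5P [h1 h2 h3 h4 h5]]]]; rewrite size_seq_of_perm in h3.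
have pf (a : 'I_3) : nth 0 [:: i; j; k] a < n by case: a => [[|[|[|a]]] ha] //=; lia.
apply/existsP; exists [ffun a : 'I_3 => Ordinal (pf a)].
apply/forallP => a; apply/forallP => b; rewrite !ffunE.
rewrite -(nth_seq_of_perm s (Ordinal (pf a))) -(nth_seq_of_perm s (Ordinal (pf b))) /=.
by case: a => [[|[|[|a]]] ha]; case: b => [[|[|[|b]]] hb] //=; lia.
Qed.

Lemma contains31524E n (s : {perm 'I_n}) :
  contains s [:: 3; 1; 5; 2; 4] <-> has31524 (seq_of_perm s).
Proof.
split.
  case/existsP => f /forallP H.
  pose o (k : nat) (hk : k < 5) : 'I_(size [:: 3; 1; 5; 2; 4]) := Ordinal hk.
  have H01 := forallP (H (o 0 isT)) (o 1 isT).
  have H12 := forallP (H (o 1 isT)) (o 2 isT).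
  have H23 := forallP (H (o 2 isT)) (o 3 isT).
  have H34 := forallP (H (o 3 isT)) (o 4 isT).
  have H13 := forallP (H (o 1 isT)) (o 3 isT).
  have H30 := forallP (H (o 3 isT)) (o 0 isT).
  have H04 := forallP (H (o 0 isT)) (o 4 isT).
  have H42 := forallP (H (o 4 isT)) (o 2 isT).
  move: H01 H12 H23 H34 H13 H30 H04 H42.
  move: (f (o 0 isT)) (f (o 1 isT)) (f (o 2 isT)) (f (o 3 isT)) (f (o 4 isT)).
  move=> x0 x1 x2 x3 x4 /= H01 H12 H23 H34 H13 H30 H04 H42.
  exists x0, x1, x2, x3, x4; rewrite /occ31524 size_seq_of_perm !nth_seq_of_perm ltn_ord.
  by apply/and5P; split; try lia; apply/and5P; split; lia.
move=> [a [b [c [d [e /and5P [h1 h2 h3 h4 /and5P [h5 h6 h7 h8 h9]]]]]]].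
rewrite size_seq_of_perm in h5.
have pf (x : 'I_5) : nth 0 [:: a; b; c; d; e] x < n.
  by case: x => [[|[|[|[|[|x]]]]] hx] //=; lia.
apply/existsP; exists [ffun x : 'I_5 => Ordinal (pf x)].
apply/forallP => x; apply/forallP => y; rewrite !ffunE.
rewrite -(nth_seq_of_perm s (Ordinal (pf x))) -(nth_seq_of_perm s (Ordinal (pf y))) /=.
by case: x => [[|[|[|[|[|x]]]]] hx]; case: y => [[|[|[|[|[|y]]]]] hy] //=; lia.
Qed.

Lemma goodE n (s : {perm 'I_n}) : (s \in F321_31524 n) <-> good (seq_of_perm s).
Proof.
rewrite inE -andbA; split.
  case/and3P => /fishburnE hf /negP h3 /negP h5.
  by split=> // [/contains321E | /contains31524E].
case=> /fishburnE hf h3 h5; rewrite hf /avoids /=.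
by apply/andP; split; apply/negP; [move/contains321E | move/contains31524E].
Qed.

Lemma card_F321_31524 n : #|F321_31524 n| = size (goodList n).
Proof.
set M := [seq seq_of_perm q | q <- enum (F321_31524 n)].
have uM : uniq M by rewrite map_inj_uniq ?enum_uniq //; exact: seq_of_perm_inj.
have eM : M =i goodList n.
  move=> l; apply/idP/idP.
    move=> /mapP [q]; rewrite mem_enum => /goodE gq ->.
    exact: goodList_complete (perm_seq_of_perm q) gq.
  move=> /goodList_good [pl g]; have [q eq] := seq_of_perm_onto pl.
  by rewrite -eq; apply: map_f; rewrite mem_enum; apply/goodE; rewrite eq.
have := perm_size (uniq_perm uM (goodList_uniq n) eM).
by rewrite size_map -cardE.
Qed.

(* Keep the argument n of the main theorem explicit, as in its statement. *)
Unset Implicit Arguments.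

Theorem mainTheorem19 (n : nat) : 1 <= n ->
  2 * #|F321_31524 n| = pell n + pell n.-1 + 1.
Proof.
case: n => [//|m] _; rewrite card_F321_31524 [m.+1.-1]/=.
have [_ hS _ _] := size_goodList_pell m.
have := pellSS m; lia.
Qed.
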